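(* Assume $-1\in\mathbb F^2$ and let $J=JCK(Z,\delta)$, with $Z$-basis $\{1,v_1,v_2,v_3\}$ of $J_{\bar0}$ and $\{y,y_1,y_2,y_3\}$ of $J_{\bar1}$ as in the context. Then there is an injective group homomorphism from the symmetric group $S_4$ into the automorphism group of $J$ (with image consisting of even $Z$-linear automorphisms) such that: $\tau_1=(1\,2)(3\,4)$ acts as the identity on $J^{[\bar0,\bar0]}\oplus J^{[\bar1,\bar1]}$ and as $-1$ on $J^{[\bar1,\bar0]}\oplus J^{[\bar0,\bar1]}$; $\tau_2=(2\,3)(4\,1)$ acts as the identity on $J^{[\bar0,\bar0]}\oplus J^{[\bar1,\bar0]}$ and as $-1$ on $J^{[\bar0,\bar1]}\oplus J^{[\bar1,\bar1]}$; $\varphi=(1\,2\,3)$ acts as the $Z$-linear map with $\varphi(1)=1$, $\varphi(y)=y$, $\varphi(v_i)=v_{i+1}$, $\varphi(y_i)=y_{i+1}$ (indices mod 3); $\tau=(1\,2)$ acts as the $Z$-linear map with $\tau(1)=1$, $\tau(y)=y$, $\tau(v_1)=-v_2$, $\tau(v_2)=-v_1$, $\tau(v_3)=-v_3$, $\tau(y_1)=-y_2$, $\tau(y_2)=-y_1$, $\tau(y_3)=-y_3$.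
   Context: Let $\mathbb F$ be a field of characteristic $\neq 2$, $Z$ a unital commutative associative $\mathbb F$-algebra, and $\delta$ a derivation of $Z$ such that $Z\delta(Z)=Z$ (the $\mathbb F$-span of all products $f\delta(g)$, $f,g\in Z$, is $Z$). The Cheng-Kac Jordan superalgebra $J=JCK(Z,\delta)=J_{\bar0}\oplus J_{\bar1}$ is defined as follows: $J_{\bar0}=Z1\oplus Zw_1\oplus Zw_2\oplus Zw_3$ and $J_{\bar1}=Zx\oplus Zx_1\oplus Zx_2\oplus Zx_3$ are free $Z$-modules of rank 4; $J_{\bar0}$ is the $Z$-algebra $(\mathbb F1\oplus\mathbb Fw_1\oplus\mathbb Fw_2\oplus\mathbb Fw_3)\otimes_{\mathbb F}Z$ with $1$ the identity, $w_1^2=w_2^2=1$, $w_3^2=-1$, $w_iw_j=0$ for $i\ne j$. For $f,g\in Z$ and $i,j\in\{1,2,3\}$ the remaining products are: $f(gx)=(fg)x$, $f(gx_j)=(fg)x_j$, $(fw_i)(gx)=(\delta(f)g)x_i$, $(fw_i)(gx_j)=-(fg)x_{i\times j}$, $(fx)(gx)=\delta(f)g-f\delta(g)$, $(fx)(gx_j)=-(fg)w_j$, $(fx_i)(gx)=(fg)w_i$, $(fx_i)(gx_j)=0$, extended by supercommutativity ($ab=(-1)^{|a||b|}ba$), where $x_{1\times2}=-x_{2\times1}=x_3$, $x_{1\times3}=-x_{3\times1}=x_2$, $x_{3\times2}=-x_{2\times3}=x_1$, $x_{i\times i}=0$. $J$ is $\mathbb Z_2^2$-graded by $J^{[\bar0,\bar0]}=Z\oplus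 Zx$, $J^{[\bar1,\bar0]}=Zw_1\oplus Zx_1$, $J^{[\bar0,\bar1]}=Zw_2\oplus Zx_2$, $J^{[\bar1,\bar1]}=Zw_3\oplus Zx_3$. When $-1\in\mathbb F^2$, fix $\sqrt{-1}\in\mathbb F$ and set $v_1=\sqrt{-1}w_1$, $v_2=\sqrt{-1}w_2$, $v_3=w_3$, $y=x$, $y_1=\sqrt{-1}x_1$, $y_2=\sqrt{-1}x_2$, $y_3=x_3$. *)

From HB Require Import structures.
From mathcomp Require Import all_boot all_order all_algebra all_fingroup.
Set Implicit Arguments. Unset Strict Implicit. Unset Printing Implicit Defensive.
Import GRing.Theory.
Local Open Scope ring_scope.

(* E1 = 1, W1 W2 W3 = w_1 w_2 w_3 (even), X = x, X1 X2 X3 = x_1 x_2 x_3 (odd) *)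
Inductive CKbasis := E1 | W1 | W2 | W3 | X | X1 | X2 | X3.

Definition CKb_to_ord (b : CKbasis) : 'I_8 :=
  match b with
  | E1 => @Ordinal 8 0 isT | W1 => @Ordinal 8 1 isT | W2 => @Ordinal 8 2 isT
  | W3 => @Ordinal 8 3 isT | X => @Ordinal 8 4 isT | X1 => @Ordinal 8 5 isT
  | X2 => @Ordinal 8 6 isT | X3 => @Ordinal 8 7 isT end.
Definition CKb_of_ord (i : 'I_8) : CKbasis :=
  match val i with
  | 0 => E1 | 1 => W1 | 2 => W2 | 3 => W3 | 4 => X | 5 => X1 | 6 => X2 | _ => X3 end.
Lemma CKb_to_ordK : cancel CKb_to_ord CKb_of_ord. Proof. by case. Qed.
HB.instance Definition _ := Equality.copy CKbasis (can_type CKb_to_ordK).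
HB.instance Definition _ := Choice.copy CKbasis (can_type CKb_to_ordK).
HB.instance Definition _ := Countable.copy CKbasis (can_type CKb_to_ordK).
HB.instance Definition _ := Finite.copy CKbasis (can_type CKb_to_ordK).

Definition CKodd (b : CKbasis) : bool :=
  match b with X | X1 | X2 | X3 => true | _ => false end.

Definition CKdeg (b : CKbasis) : bool * bool :=
  match b with
  | E1 | X => (false, false) | W1 | X1 => (true, false)
  | W2 | X2 => (false, true) | W3 | X3 => (true, true) end.

Section CK.
Variables (F : fieldType) (Z : comAlgType F) (delta : Z -> Z).

Definition CK := {ffun CKbasis -> Z}.

Definition CKmono (f : Z) (b : CKbasis) : CK := [ffun c => if c == b then f else 0].
Definition CKone : CK := CKmono 1 E1.

Definition CKzscale (f : Z) (u : CK) : CK := [ffun c => f * u c].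

Definition CKcross (i j : CKbasis) : Z * CKbasis :=
  match i, j with
  | X1, X2 => (1, X3) | X2, X1 => (-1, X3)
  | X1, X3 => (1, X2) | X3, X1 => (-1, X2)
  | X3, X2 => (1, X1) | X2, X3 => (-1, X1)
  | _, _ => (0, X1) end.

Definition w_of (b : CKbasis) : CKbasis :=
  match b with X1 => W1 | X2 => W2 | X3 => W3 | _ => b end.
Definition x_of (b : CKbasis) : CKbasis :=
  match b with W1 => X1 | W2 => X2 | W3 => X3 | _ => b end.

Definition CKmul_even_left (f : Z) (b : CKbasis) (g : Z) (c : CKbasis) : CK :=
  match b, c with
  (* even x even: J_0 = (F1 + Fw1 + Fw2 + Fw3) (x) Z *)
  | E1, _ => CKmono (f * g) c
  | W1, E1 | W2, E1 | W3, E1 => CKmono (f * g) b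
  | W1, W1 | W2, W2 => CKmono (f * g) E1
  | W3, W3 => CKmono (- (f * g)) E1
  | W1, W2 | W1, W3 | W2, W1 | W2, W3 | W3, W1 | W3, W2 => 0
  | W1, X | W2, X | W3, X => CKmono (delta f * g) (x_of b)
  | W1, _ | W2, _ | W3, _ =>
      let: (s, k) := CKcross (x_of b) c in CKmono (- (s * (f * g))) k
  | _, _ => 0 end.

Definition CKmul_odd_odd (f : Z) (b : CKbasis) (g : Z) (c : CKbasis) : CK :=
  match b, c with
  | X, X => CKmono (delta f * g - f * delta g) E1
  | X, _ => CKmono (- (f * g)) (w_of c)
  | _, X => CKmono (f * g) (w_of b)
  | _, _ => 0 end.

(* product of monomials; odd x even is obtained by supercommutativity
   ab = (-1)^{|a||b|} ba = ba *)
Definition CKmul_mono (f : Z) (b : CKbasis) (g : Z) (c : CKbasis) : CK :=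
  match CKodd b, CKodd c with
  | false, _ => CKmul_even_left f b g c
  | true, false => CKmul_even_left g c f b
  | true, true => CKmul_odd_odd f b g c end.

Definition CKmul (u v : CK) : CK :=
  \sum_(b : CKbasis) \sum_(c : CKbasis) CKmul_mono (u b) b (v c) c.

Definition CKeven (u : CK) : Prop := forall b, CKodd b -> u b = 0.
Definition CKoddpart (u : CK) : Prop := forall b, ~~ CKodd b -> u b = 0.
Definition CKin2 (g h : bool * bool) (u : CK) : Prop :=
  forall b, CKdeg b != g -> CKdeg b != h -> u b = 0.

Definition CKautomorphism (r : CK -> CK) : Prop :=
  [/\ bijective r,
      forall (a : F) (u v : CK), r (a *: u + v) = a *: r u + r v &
      forall u v : CK, r (CKmul u v) = CKmul (r u) (r v)].

Definition CKeven_map (r : CK -> CK) : Prop :=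
  (forall u, CKeven u -> CKeven (r u)) /\ (forall u, CKoddpart u -> CKoddpart (r u)).

Definition CKZlinear (r : CK -> CK) : Prop :=
  (forall u v, r (u + v) = r u + r v) /\
  (forall (f : Z) u, r (CKzscale f u) = CKzscale f (r u)).

End CK.

Definition is_derivation (F : fieldType) (Z : comAlgType F) (delta : Z -> Z) : Prop :=
  (forall (a : F) (f g : Z), delta (a *: f + g) = a *: delta f + delta g) /\
  (forall f g : Z, delta (f * g) = delta f * g + f * delta g).

(* Z delta(Z) = Z: every element of Z is an F-linear combination of products
   f delta(g) (scalars can be absorbed in f) *)
Definition Zdelta_full (F : fieldType) (Z : comAlgType F) (delta : Z -> Z) : Prop :=
  forall z : Z, exists s : seq (Z * Z), z = \sum_(p <- s) p.1 * delta p.2.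

(* ---------- elements of S_4 (points 1,2,3,4 are the ordinals 0,1,2,3) ---- *)
Definition p1 : 'I_4 := @Ordinal 4 0 isT.
Definition p2 : 'I_4 := @Ordinal 4 1 isT.
Definition p3 : 'I_4 := @Ordinal 4 2 isT.
Definition p4 : 'I_4 := @Ordinal 4 3 isT.

(* mathcomp convention: (s * t) x = t (s x) *)
Definition S4_tau1 : 'S_4 := tperm p1 p2 * tperm p3 p4.
Definition S4_tau2 : 'S_4 := tperm p2 p3 * tperm p4 p1.
Definition S4_phi  : 'S_4 := tperm p1 p2 * tperm p1 p3.
Definition S4_tau  : 'S_4 := tperm p1 p2.

Lemma S4_phi_spec : [/\ S4_phi p1 = p2, S4_phi p2 = p3, S4_phi p3 = p1 & S4_phi p4 = p4].
Proof. by rewrite /S4_phi !permM !permE; split; apply/val_inj. Qed.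

(* Rescaling w1, w2, x1, x2 by sqrt(-1) gives the Z-basis 1, v_a, y, y_a in which the
   multiplication table of J is uniform in the three axes a = 1, 2, 3:
   v_a v_b = -[a = b], v_a y_b = (e_a x e_b) . y, (f v_a)(g y) = (delta(f) g) y_a,
   (f y)(g y_b) = -(fg) v_b, y_a y_b = 0, (f y)(g y) = delta(f) g - f delta(g).
   Hence every signed permutation of the axes of determinant 1, acting in the same way on
   the v_a and on the y_a and fixing 1 and y, is an even Z-linear automorphism of J.
   These signed permutations form the rotation group of the cube, a copy of S_4: a
   permutation of {1,2,3,4} permutes the three pairings {{a,4},{b,c}}, which are the
   axes.  The homomorphism and injectivity properties of the resulting map from S_4, and
   the compatibility of its 24 images with the multiplication table, are finite checks. *)

From HB Require Import structures.
From mathcomp Require Import all_boot all_order all_algebra all_fingroup.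
Set Implicit Arguments. Unset Strict Implicit. Unset Printing Implicit Defensive.
Import GRing.Theory.

Inductive bilin := Mul | DerL | DerR | Bracket.

Definition bilin_eqb (k k' : bilin) :=
  match k, k' with
  | Mul, Mul | DerL, DerL | DerR, DerR | Bracket, Bracket => true
  | _, _ => false
  end.

Lemma bilin_eqP : Equality.axiom bilin_eqb.
Proof. by do 2 case; constructor. Qed.

HB.instance Definition _ := hasDecEq.Build bilin bilin_eqP.

(* The axes are named W1, W2, W3; [Some (n, d)] means e_a x e_b = (-1)^n e_d. *)
Definition axis_cross (a b : CKbasis) : option (bool * CKbasis) :=
  match a, b with
  | W1, W2 => Some (false, W3) | W2, W3 => Some (false, W1) | W3, W1 => Some (false, W2)
  | W2, W1 => Some (true, W3) | W3, W2 => Some (true, W1) | W1, W3 => Some (true, W2)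
  | _, _ => None
  end.

(* The product of J in the basis 1, v_a, y, y_a, where W_a and X_a stand for v_a and
   y_a: [Some (n, k, d)] means (f b)(g c) = (-1)^n k(f, g) d, where the bilinear form
   k(f, g) is fg, delta(f) g, f delta(g) or delta(f) g - f delta(g). *)
Definition vmul_table (b c : CKbasis) : option (bool * bilin * CKbasis) :=
  match b, c with
  | E1, _ => Some (false, Mul, c)
  | _, E1 => Some (false, Mul, b)
  | X, X => Some (false, Bracket, E1)
  | X, (W1 | W2 | W3) => Some (false, DerR, x_of c)
  | X, _ => Some (true, Mul, w_of c)
  | (W1 | W2 | W3), X => Some (false, DerL, x_of b)
  | _, X => Some (false, Mul, w_of b)
  | (W1 | W2 | W3), (W1 | W2 | W3) => if b == c then Some (true, Mul, E1) else None
  | (W1 | W2 | W3), _ => omap (fun p => (p.1, Mul, x_of p.2)) (axis_cross b (w_of c))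
  | _, (W1 | W2 | W3) => omap (fun p => (p.1, Mul, x_of p.2)) (axis_cross c (w_of b))
  | _, _ => None
  end.

(* b |-> (-1)^(sp_neg s b) (s b) *)
Record sperm := SPerm { sp_fun :> CKbasis -> CKbasis; sp_neg : CKbasis -> bool }.

Definition sperm_comp (s t : sperm) : sperm :=
  SPerm (fun b => t (s b)) (fun b => sp_neg s b (+) sp_neg t (s b)).

Definition ck_basis := [:: E1; W1; W2; W3; X; X1; X2; X3].

Lemma mem_ck_basis b : b \in ck_basis.
Proof. by case: b. Qed.

Definition sp_graph (s : sperm) : seq (CKbasis * bool) :=
  [seq (s b, sp_neg s b) | b <- ck_basis].

Lemma sp_graph_eq s t b :
  sp_graph s = sp_graph t -> s b = t b /\ sp_neg s b = sp_neg t b.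
Proof.
move/(congr1 (fun l => nth (E1, false) l (index b ck_basis))).
by rewrite !(nth_map b) ?index_mem ?mem_ck_basis // nth_index ?mem_ck_basis // => -[-> ->].
Qed.

Definition sp_transport (s : sperm) (b c : CKbasis) (t : bool * bilin * CKbasis) :=
  let: (n, k, d) := t in (n (+) sp_neg s b (+) sp_neg s c (+) sp_neg s d, k, s d).

Definition preserves_table (s : sperm) : bool :=
  all (fun b => all (fun c =>
    vmul_table (s b) (s c) == omap (sp_transport s b c) (vmul_table b c)) ck_basis) ck_basis.

Lemma preserves_tableP s b c : preserves_table s ->
  vmul_table (s b) (s c) = omap (sp_transport s b c) (vmul_table b c).
Proof.
by move=> /allP/(_ b (mem_ck_basis b))/allP/(_ c (mem_ck_basis c))/eqP.
Qed.

Definition s4_seq (s : 'S_4) : seq nat := [seq val (s x) | x <- [:: p1; p2; p3; p4]].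

Definition seq_comp (ks kt : seq nat) : seq nat := [seq nth 0 kt a | a <- ks].

Definition S4_seqs := permutations (iota 0 4).

Definition inversions (k : seq nat) : nat :=
  count (fun ab : nat * nat => (ab.1 < ab.2) && (nth 0 k ab.2 < nth 0 k ab.1))
        [seq (a, b) | a <- iota 0 4, b <- iota 0 4].

Definition axis_point (b : CKbasis) : nat :=
  match b with W1 | X1 => 0 | W2 | X2 => 1 | _ => 2 end.

Definition point_axis (n : nat) : CKbasis :=
  match n with 0 => W1 | 1 => W2 | _ => W3 end.

(* Axis a is the pairing {{a, 3}, rest} of {0,1,2,3}, or the vector u_a equal to 1 on
   {a, 3} and -1 elsewhere.  The permutation k maps u_a to +-u_a', where {a', 3} is a
   block of the image pairing (so a' = 3 - ka - k3 unless 3 is in {ka, k3}, in which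
   case the sign is +, and - otherwise).  Twisting by the sign of k gives determinant 1. *)
Definition cube_axis (k : seq nat) (b : CKbasis) : CKbasis * bool :=
  let: ka := nth 0 k (axis_point b) in let: k3 := nth 0 k 3 in
  if k3 == 3 then (point_axis ka, false)
  else if ka == 3 then (point_axis k3, false)
  else (point_axis (3 - ka - k3), true).

Definition cube_rotation (k : seq nat) : sperm :=
  SPerm (fun b => match b with
                  | E1 | X => b
                  | W1 | W2 | W3 => (cube_axis k b).1
                  | _ => x_of (cube_axis k b).1 end)
        (fun b => match b with
                  | E1 | X => false
                  | _ => (cube_axis k b).2 (+) odd (inversions k) end).

Lemma cube_rotation_comp_check :
  all (fun ks => all (fun kt => sp_graph (cube_rotation (seq_comp ks kt))
        == sp_graph (sperm_comp (cube_rotation ks) (cube_rotation kt))) S4_seqs) S4_seqs.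
Proof. by vm_compute. Qed.

Lemma cube_rotation_inj_check :
  all (fun ks => all (fun kt =>
    (sp_graph (cube_rotation ks) == sp_graph (cube_rotation kt)) ==> (ks == kt)) S4_seqs)
    S4_seqs.
Proof. by vm_compute. Qed.

Lemma cube_rotation_table_check : all (fun k => preserves_table (cube_rotation k)) S4_seqs.
Proof. by vm_compute. Qed.

Lemma cube_rotation_parity_check :
  all (fun k => all (fun b => CKodd (cube_rotation k b) == CKodd b) ck_basis) S4_seqs.
Proof. by vm_compute. Qed.

Lemma mem_ord4 (x : 'I_4) : x \in [:: p1; p2; p3; p4].
Proof. by case: x => [[|[|[|[|m]]]] Hm] //; rewrite !inE -!val_eqE. Qed.

Lemma s4_seq_mem s : s4_seq s \in S4_seqs.
Proof.
rewrite mem_permutations; apply: uniq_perm (iota_uniq 0 4) _ => [|n].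
  by rewrite map_inj_uniq // => x y /val_inj /perm_inj.
rewrite mem_iota add0n; apply/mapP/idP => [[x _ ->]|/andP[_ hn]]; first exact: ltn_ord.
by exists ((s^-1)%g (Ordinal hn)); rewrite ?mem_ord4 ?permKV.
Qed.

Lemma s4_seqM s t : s4_seq (s * t)%g = seq_comp (s4_seq s) (s4_seq t).
Proof.
rewrite /seq_comp -map_comp; apply: eq_map => x /=.
by rewrite permM; move: (mem_ord4 (s x)); rewrite !inE => /or4P[] /eqP->.
Qed.

Lemma s4_seq_inj : injective s4_seq.
Proof.
move=> s t /= [h1 h2 h3 h4]; apply/permP => x.
by move: (mem_ord4 x); rewrite !inE => /or4P[] /eqP->; apply/val_inj.
Qed.

Lemma s4_seq1 : s4_seq 1%g = [:: 0; 1; 2; 3].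
Proof. by rewrite /s4_seq /= !perm1. Qed.

Definition S4rot (s : 'S_4) : sperm := cube_rotation (s4_seq s).

Lemma S4rotM s t : sp_graph (S4rot (s * t)%g) = sp_graph (sperm_comp (S4rot s) (S4rot t)).
Proof.
rewrite /S4rot s4_seqM; apply/eqP; move: cube_rotation_comp_check.
by move=> /allP/(_ _ (s4_seq_mem s))/allP/(_ _ (s4_seq_mem t)).
Qed.

Lemma S4rot_graph_inj s t : sp_graph (S4rot s) = sp_graph (S4rot t) -> s = t.
Proof.
move=> /eqP hst; apply: s4_seq_inj; apply/eqP; move: hst; apply/implyP.
by move: cube_rotation_inj_check => /allP/(_ _ (s4_seq_mem s))/allP/(_ _ (s4_seq_mem t)).
Qed.

Lemma S4rot_table s : preserves_table (S4rot s).
Proof. by move: cube_rotation_table_check => /allP/(_ _ (s4_seq_mem s)). Qed.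

Lemma S4rot_parity s b : CKodd (S4rot s b) = CKodd b.
Proof.
move: cube_rotation_parity_check => /allP/(_ _ (s4_seq_mem s)).
by move=> /allP/(_ b (mem_ck_basis b))/eqP.
Qed.

Lemma S4rotK s : cancel (S4rot s) (S4rot s^-1).
Proof.
move=> b; have [/= <- _] := sp_graph_eq b (S4rotM s s^-1).
by rewrite mulgV /S4rot s4_seq1; case: b.
Qed.

(* The Klein four-group acts through the Z_2^2-grading. *)
Definition grading_sperm (chi : bool * bool -> bool) : sperm :=
  SPerm id (fun b => chi (CKdeg b)).

Definition cycle_sperm : sperm :=
  SPerm (fun b => match b with
                  | W1 => W2 | W2 => W3 | W3 => W1 | X1 => X2 | X2 => X3 | X3 => X1
                  | _ => b end)
        (fun _ => false).

Definition swap_sperm : sperm :=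
  SPerm (fun b => match b with W1 => W2 | W2 => W1 | X1 => X2 | X2 => X1 | _ => b end)
        (fun b => match b with E1 | X => false | _ => true end).

Lemma S4rot_tau1 : sp_graph (S4rot S4_tau1) = sp_graph (grading_sperm (fun d => d.1 (+) d.2)).
Proof. by rewrite /S4rot /s4_seq /= /S4_tau1 !permM !permE. Qed.

Lemma S4rot_tau2 : sp_graph (S4rot S4_tau2) = sp_graph (grading_sperm snd).
Proof. by rewrite /S4rot /s4_seq /= /S4_tau2 !permM !permE. Qed.

Lemma S4rot_phi : sp_graph (S4rot S4_phi) = sp_graph cycle_sperm.
Proof. by rewrite /S4rot /s4_seq /=; case: S4_phi_spec => -> -> -> ->. Qed.

Lemma S4rot_tau : sp_graph (S4rot S4_tau) = sp_graph swap_sperm.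
Proof. by rewrite /S4rot /s4_seq /= /S4_tau !permE. Qed.

Local Open Scope ring_scope.

Lemma signr_inj_2neq0 (F : fieldType) :
  (2%:R : F) != 0 -> injective (fun n : bool => (-1) ^+ n : F).
Proof.
move=> h2 [] [] //= /eqP; rewrite ?expr0 ?expr1 => /eqP h; case/eqP: h2.
  by rewrite -[2%:R]/(1 + 1 : F) -{1}h addNr.
by rewrite -[2%:R]/(1 + 1 : F) {1}h addNr.
Qed.

Section Monomials.
Variables (F : fieldType) (Z : comAlgType F).
Implicit Types (f g : Z) (u v : CK Z) (b c : CKbasis) (s t : sperm).

Lemma CKmonoE f b c : CKmono f b c = if c == b then f else 0.
Proof. by rewrite ffunE. Qed.

Lemma CKmono0 b : CKmono 0 b = 0 :> CK Z.
Proof. by apply/ffunP => c; rewrite !ffunE if_same. Qed.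

Lemma CKmonoZ (a : F) f b : CKmono (a *: f) b = a *: CKmono f b.
Proof. by apply/ffunP => c; rewrite !ffunE; case: eqP; rewrite ?scaler0. Qed.

Lemma CKmonoD f g b : CKmono (f + g) b = CKmono f b + CKmono g b.
Proof. by apply/ffunP => c; rewrite !ffunE; case: eqP; rewrite ?addr0. Qed.

Lemma CK_decomp u : u = \sum_b CKmono (u b) b.
Proof.
apply/ffunP => c; rewrite sum_ffunE (bigD1 c) //= CKmonoE eqxx big1 ?addr0 //.
by move=> b /negbTE nbc; rewrite CKmonoE eq_sym nbc.
Qed.

Definition CKrescale (r : CKbasis -> F) u : CK Z := [ffun b => r b *: u b].

Lemma CKrescale_is_linear r : linear (CKrescale r).
Proof. by move=> a u v; apply/ffunP => b; rewrite !ffunE scalerDr !scalerA mulrC. Qed.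

HB.instance Definition _ r :=
  GRing.isLinear.Build F (CK Z) (CK Z) _ (CKrescale r) (CKrescale_is_linear r).

Lemma CKrescale_mono r f b : CKrescale r (CKmono f b) = CKmono (r b *: f) b.
Proof. by apply/ffunP => c; rewrite !ffunE; case: eqP => [->|]; rewrite ?scaler0. Qed.

Lemma CKrescaleK r r' : (forall b, r' b * r b = 1) -> cancel (CKrescale r) (CKrescale r').
Proof. by move=> hr u; apply/ffunP => b; rewrite !ffunE scalerA hr scale1r. Qed.

Lemma CKrescale_zscale r f u : CKrescale r (CKzscale f u) = CKzscale f (CKrescale r u).
Proof. by apply/ffunP => b; rewrite !ffunE scalerAr. Qed.

Lemma CKrescale_even r : CKeven_map (CKrescale r).
Proof. by split=> u hu b hb; rewrite ffunE hu ?scaler0. Qed.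

Definition CKsperm s u : CK Z := \sum_b CKmono ((-1) ^+ sp_neg s b *: u b) (s b).

Lemma CKsperm_is_linear s : linear (CKsperm s).
Proof.
move=> a u v; rewrite /CKsperm scaler_sumr -big_split; apply: eq_bigr => b _ /=.
by rewrite !ffunE scalerDr scalerA mulrC -scalerA CKmonoD CKmonoZ.
Qed.

HB.instance Definition _ s :=
  GRing.isLinear.Build F (CK Z) (CK Z) _ (CKsperm s) (CKsperm_is_linear s).

Lemma CKsperm_mono s f b : CKsperm s (CKmono f b) = CKmono ((-1) ^+ sp_neg s b *: f) (s b).
Proof.
rewrite /CKsperm (bigD1 b) //= CKmonoE eqxx big1 ?addr0 // => c /negbTE ncb.
by rewrite CKmonoE ncb scaler0 CKmono0.
Qed.

Lemma CKsperm_comp s t u : CKsperm t (CKsperm s u) = CKsperm (sperm_comp s t) u.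
Proof.
rewrite [CKsperm s u]/CKsperm linear_sum; apply: eq_bigr => b _ /=.
by rewrite CKsperm_mono scalerA -signr_addb addbC.
Qed.

Lemma CKsperm_graph s t : sp_graph s = sp_graph t -> CKsperm s =1 CKsperm t.
Proof. by move=> hst u; apply: eq_bigr => b _; have [-> ->] := sp_graph_eq b hst. Qed.

Lemma CKsperm_coord s u c :
  CKsperm s u c = \sum_b (if c == s b then (-1) ^+ sp_neg s b *: u b else 0).
Proof. by rewrite sum_ffunE; apply: eq_bigr => b _; rewrite CKmonoE. Qed.

Lemma CKsperm_coord_inj s u b :
  injective s -> CKsperm s u (s b) = (-1) ^+ sp_neg s b *: u b.
Proof.
move=> s_inj; rewrite CKsperm_coord (bigD1 b) //= eqxx big1 ?addr0 // => c ncb.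
by rewrite (inj_eq s_inj) eq_sym (negbTE ncb).
Qed.

Lemma CKsperm_fix s (n : bool) u :
  (forall b, u b != 0 -> s b = b /\ sp_neg s b = n) -> CKsperm s u = (-1) ^+ n *: u.
Proof.
move=> hs; rewrite {2}[u]CK_decomp scaler_sumr; apply: eq_bigr => b _.
have [->|/hs[-> ->]] := eqVneq (u b) 0; last by rewrite CKmonoZ.
by rewrite !scaler0 !CKmono0 scaler0.
Qed.

Lemma CKsperm_zscale s f u : CKsperm s (CKzscale f u) = CKzscale f (CKsperm s u).
Proof.
apply/ffunP => c; rewrite ffunE !CKsperm_coord mulr_sumr; apply: eq_bigr => b _.
by case: eqP; rewrite ?mulr0 // ffunE scalerAr.
Qed.

Lemma CKsperm_even s : (forall b, CKodd (s b) = CKodd b) -> CKeven_map (CKsperm s).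
Proof.
move=> hs; split=> u hu c hc; rewrite CKsperm_coord big1 // => b _;
  by case: eqP => // hcb; rewrite hu ?scaler0 // -hs -hcb.
Qed.

End Monomials.

Section SquareRootFrame.
Variables (F : fieldType) (Z : comAlgType F) (delta : Z -> Z) (i : F).
Hypotheses (hi : i ^+ 2 = -1) (delta_linear : linear delta).
Implicit Types (f g : Z) (u v : CK Z) (b c : CKbasis) (s : sperm).

Lemma deltaZ (a : F) f : delta (a *: f) = a *: delta f.
Proof.
have delta0 : delta 0 = 0.
  apply: (addIr (delta 0)); rewrite -{1}(scale1r (delta 0)) -delta_linear.
  by rewrite scale1r !add0r.
by rewrite -[a *: f]addr0 delta_linear delta0 addr0.
Qed.

Definition bilin_eval (k : bilin) f g : Z :=
  match k with
  | Mul => f * g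
  | DerL => delta f * g
  | DerR => f * delta g
  | Bracket => delta f * g - f * delta g
  end.

Lemma bilin_evalZ k (a a' : F) f g :
  bilin_eval k (a *: f) (a' *: g) = (a * a') *: bilin_eval k f g.
Proof.
by case: k; rewrite /= ?deltaZ -?scalerAl -?scalerAr ?scalerA ?scalerBr 1?mulrC.
Qed.

Definition table_term f g (t : option (bool * bilin * CKbasis)) : CK Z :=
  if t is Some (n, k, d) then CKmono ((-1) ^+ n *: bilin_eval k f g) d else 0.

Definition vmul u v : CK Z := \sum_b \sum_c table_term (u b) (v c) (vmul_table b c).

Definition vscale b : F := match b with W1 | W2 | X1 | X2 => i | _ => 1 end.

Definition vscale_inv b : F := (vscale b)^-1.

Definition vbasis b : CK Z := CKrescale vscale (CKmono 1 b).

Lemma vscale_neq0 b : vscale b != 0.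
Proof.
have i_neq0 : i != 0.
  by apply: contra_eq_neq hi => ->; rewrite expr2 mul0r eq_sym oppr_eq0 oner_neq0.
by case: b; rewrite /= ?oner_neq0.
Qed.

Lemma CKrescale_vscaleK : cancel (CKrescale vscale : CK Z -> CK Z) (CKrescale vscale_inv).
Proof. by apply: CKrescaleK => b; rewrite mulVf ?vscale_neq0. Qed.

Lemma CKrescale_vscaleKV : cancel (CKrescale vscale_inv : CK Z -> CK Z) (CKrescale vscale).
Proof. by apply: CKrescaleK => b; rewrite mulfV ?vscale_neq0. Qed.

Lemma vbasisE b : vbasis b = vscale b *: CKmono 1 b.
Proof. by rewrite /vbasis CKrescale_mono CKmonoZ. Qed.

Lemma CKmul_mono_vscale f b g c :
  CKmul_mono delta (vscale b *: f) b (vscale c *: g) c =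
  CKrescale vscale (table_term f g (vmul_table b c)).
Proof.
case: b; case: c; rewrite /CKmul_mono /CKmul_even_left /CKmul_odd_odd /= ?CKrescale_mono.
all: rewrite ?linear0 ?mul0r ?oppr0 ?CKmono0 //; congr CKmono.
all: rewrite /= ?deltaZ -?scalerAl -?scalerAr ?scalerA ?mulr1 ?mul1r ?scale1r ?expr0.
all: rewrite ?expr1 -?expr2 ?hi ?mulrN1 ?scaleN1r ?scalerN ?mulNr ?opprK ?scale1r //.
all: rewrite ?mul1r ?scaleNr ?scalerN ?opprK //.
all: by rewrite mulrC.
Qed.

Lemma CKmul_vscale u v :
  CKmul delta (CKrescale vscale u) (CKrescale vscale v) = CKrescale vscale (vmul u v).
Proof.
rewrite /CKmul /vmul linear_sum; apply: eq_bigr => b _; rewrite linear_sum.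
by apply: eq_bigr => c _; rewrite !ffunE CKmul_mono_vscale.
Qed.

Lemma CKsperm_table_term s b c f g t :
  CKsperm s (table_term f g t) =
  table_term ((-1) ^+ sp_neg s b *: f) ((-1) ^+ sp_neg s c *: g) (omap (sp_transport s b c) t).
Proof.
case: t => [[[n k] d]|] /=; last exact: linear0.
rewrite CKsperm_mono bilin_evalZ !scalerA !signr_addb; congr (CKmono (_ *: _) _).
rewrite -!signr_addb; congr (_ ^+ nat_of_bool _).
by case: n (sp_neg s b) (sp_neg s c) (sp_neg s d) => [] [] [] [].
Qed.

Lemma CKsperm_vmul s u v : injective s -> preserves_table s ->
  CKsperm s (vmul u v) = vmul (CKsperm s u) (CKsperm s v).
Proof.
move=> s_inj hs; rewrite /vmul linear_sum [RHS](reindex_inj s_inj).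
apply: eq_bigr => b _; rewrite linear_sum [RHS](reindex_inj s_inj).
apply: eq_bigr => c _ /=.
by rewrite !CKsperm_coord_inj // preserves_tableP // (CKsperm_table_term s b c).
Qed.

(* The signed permutation s acting in the basis 1, v_a, y, y_a. *)
Definition CKrot s u : CK Z := CKrescale vscale (CKsperm s (CKrescale vscale_inv u)).

Lemma CKrot_comp s t u : CKrot t (CKrot s u) = CKrot (sperm_comp s t) u.
Proof. by rewrite /CKrot CKrescale_vscaleK CKsperm_comp. Qed.

Lemma CKrot_graph s t : sp_graph s = sp_graph t -> CKrot s =1 CKrot t.
Proof. by move=> hst u; rewrite /CKrot (CKsperm_graph hst). Qed.

Lemma CKrot_vbasis s b : CKrot s (vbasis b) = (-1) ^+ sp_neg s b *: vbasis (s b).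
Proof. by rewrite /CKrot /vbasis CKrescale_vscaleK CKsperm_mono CKmonoZ !linearZ. Qed.

Lemma CKrot_fix s (n : bool) u :
  (forall b, u b != 0 -> s b = b /\ sp_neg s b = n) -> CKrot s u = (-1) ^+ n *: u.
Proof.
move=> hs; rewrite /CKrot (@CKsperm_fix _ _ _ n) => [|b].
  by rewrite linearZ /= CKrescale_vscaleKV.
by rewrite ffunE scaler_eq0 negb_or => /andP[_ /hs].
Qed.

Lemma CKrot_grading (chi : bool * bool -> bool) (g h : bool * bool) u :
  chi g = chi h -> CKin2 g h u -> CKrot (grading_sperm chi) u = (-1) ^+ chi g *: u.
Proof.
move=> chi_gh hu; apply: CKrot_fix => b ub; split=> //=.
have /orP[] : (CKdeg b == g) || (CKdeg b == h).
  by apply: contraR ub; rewrite negb_or => /andP[hg hh]; apply/eqP/hu.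
all: by move=> /eqP->.
Qed.

Lemma CKrot_mul s u v : injective s -> preserves_table s ->
  CKrot s (CKmul delta u v) = CKmul delta (CKrot s u) (CKrot s v).
Proof.
move=> s_inj hs; rewrite /CKrot -{1}(CKrescale_vscaleKV u) -{1}(CKrescale_vscaleKV v).
by rewrite CKmul_vscale CKrescale_vscaleK CKsperm_vmul // CKmul_vscale.
Qed.

Lemma CKrot_automorphism s t : injective s -> preserves_table s ->
  cancel (CKrot s) (CKrot t) -> cancel (CKrot t) (CKrot s) ->
  CKautomorphism delta (CKrot s).
Proof.
move=> s_inj hs hK hKV; split; first by exists (CKrot t).
  by move=> a u v; rewrite /CKrot !linearP.
by move=> u v; apply: CKrot_mul.
Qed.

Lemma CKrot_Zlinear s : CKZlinear (CKrot s).
Proof.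
split=> [u v|f u]; first by rewrite /CKrot !linearD.
by rewrite /CKrot CKrescale_zscale CKsperm_zscale CKrescale_zscale.
Qed.

Lemma CKrot_even s : (forall b, CKodd (s b) = CKodd b) -> CKeven_map (CKrot s).
Proof.
move=> hs; have [eR eR'] := CKrescale_even Z vscale; have [eS eS'] := CKsperm_even Z hs.
have [eI eI'] := CKrescale_even Z vscale_inv.
by split=> u hu; [apply/eR/eS/eI | apply/eR'/eS'/eI'].
Qed.

Lemma vbasis_sign_inj (m n : bool) b c : (2%:R : F) != 0 ->
  (-1) ^+ m *: vbasis b = (-1) ^+ n *: vbasis c -> b = c /\ m = n.
Proof.
move=> h2; rewrite !vbasisE !scalerA -!CKmonoZ => /ffunP/(_ b).
rewrite !CKmonoE eqxx; case: eqP => [<-|_] /eqP.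
  rewrite -subr_eq0 -scalerBl scaler_eq0 oner_eq0 orbF subr_eq0.
  by move=> /eqP/(mulIf (vscale_neq0 b))/(signr_inj_2neq0 h2).
by rewrite scaler_eq0 mulf_eq0 signr_eq0 (negbTE (vscale_neq0 b)) oner_eq0.
Qed.

End SquareRootFrame.

Section S4Action.
Variables (F : fieldType) (Z : comAlgType F) (delta : Z -> Z) (i : F).
Hypotheses (hi : i ^+ 2 = -1) (delta_linear : linear delta).

Definition S4act (s : 'S_4) : CK Z -> CK Z := CKrot i (S4rot s).

Lemma S4actM s t u : S4act (s * t) u = S4act t (S4act s u).
Proof. by rewrite /S4act CKrot_comp // (CKrot_graph _ (S4rotM s t)). Qed.

Lemma S4act1 u : S4act 1 u = u.
Proof. by rewrite /S4act (@CKrot_fix _ _ _ hi _ false) ?scale1r // /S4rot s4_seq1 => -[]. Qed.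

Lemma S4actK s : cancel (S4act s) (S4act s^-1).
Proof. by move=> u; rewrite -S4actM mulgV S4act1. Qed.

Lemma S4act_automorphism s : CKautomorphism delta (S4act s).
Proof.
apply: (@CKrot_automorphism _ _ _ _ hi delta_linear _ (S4rot s^-1)).
- exact: can_inj (S4rotK s).
- exact: S4rot_table.
- exact: S4actK.
- by rewrite -{2}[s]invgK; apply: S4actK.
Qed.

Lemma S4act_even s : CKeven_map (S4act s).
Proof. exact/CKrot_even/S4rot_parity. Qed.

Lemma S4act_Zlinear s : CKZlinear (S4act s).
Proof. exact: CKrot_Zlinear. Qed.

Lemma S4act_inj : (2%:R : F) != 0 -> forall s t, S4act s =1 S4act t -> s = t.
Proof.
move=> h2 s t hst; apply: S4rot_graph_inj; apply: eq_map => b.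
have := hst (vbasis Z i b); rewrite /S4act !CKrot_vbasis //.
by case/(vbasis_sign_inj hi h2) => -> ->.
Qed.

Lemma S4act_grading s chi g h u :
  sp_graph (S4rot s) = sp_graph (grading_sperm chi) -> chi g = chi h -> CKin2 g h u ->
  S4act s u = (-1) ^+ chi g *: u.
Proof. by move=> hs; rewrite /S4act (CKrot_graph _ hs); apply: CKrot_grading. Qed.

Lemma S4act_vbasis s (r : sperm) b : sp_graph (S4rot s) = sp_graph r ->
  S4act s (vbasis Z i b) = (-1) ^+ sp_neg r b *: vbasis Z i (r b).
Proof. by move=> hs; rewrite /S4act (CKrot_graph _ hs) CKrot_vbasis. Qed.

End S4Action.

Theorem theorem5p1 (F : fieldType) (Z : comAlgType F) (delta : Z -> Z)
  (char_not2 : (2%:R : F) != 0)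
  (hdelta : is_derivation delta)
  (hfull : Zdelta_full delta)
  (sqrtm1 : F) (hsqrtm1 : sqrtm1 ^+ 2 = -1) :
  let one : CK Z := CKone Z in
  let v1 : CK Z := sqrtm1 *: CKmono 1 W1 in
  let v2 : CK Z := sqrtm1 *: CKmono 1 W2 in
  let v3 : CK Z := CKmono 1 W3 in
  let y  : CK Z := CKmono 1 X in
  let y1 : CK Z := sqrtm1 *: CKmono 1 X1 in
  let y2 : CK Z := sqrtm1 *: CKmono 1 X2 in
  let y3 : CK Z := CKmono 1 X3 in
  exists rho : 'S_4 -> CK Z -> CK Z,
    (forall (s t : 'S_4) (u : CK Z), rho (s * t)%g u = rho t (rho s u)) /\
    (forall s t : 'S_4, rho s =1 rho t -> s = t) /\
    (forall s : 'S_4,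
        CKautomorphism delta (rho s) /\ CKeven_map (rho s) /\ CKZlinear (rho s)) /\
    (forall u, CKin2 (false, false) (true, true) u -> rho S4_tau1 u = u) /\
    (forall u, CKin2 (true, false) (false, true) u -> rho S4_tau1 u = - u) /\
    (forall u, CKin2 (false, false) (true, false) u -> rho S4_tau2 u = u) /\
    (forall u, CKin2 (false, true) (true, true) u -> rho S4_tau2 u = - u) /\
    (rho S4_phi one = one /\ rho S4_phi y = y /\
     rho S4_phi v1 = v2 /\ rho S4_phi v2 = v3 /\ rho S4_phi v3 = v1 /\
     rho S4_phi y1 = y2 /\ rho S4_phi y2 = y3 /\ rho S4_phi y3 = y1) /\
    (rho S4_tau one = one /\ rho S4_tau y = y /\
     rho S4_tau v1 = - v2 /\ rho S4_tau v2 = - v1 /\ rho S4_tau v3 = - v3 /\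
     rho S4_tau y1 = - y2 /\ rho S4_tau y2 = - y1 /\ rho S4_tau y3 = - y3).
Proof.
move=> one v1 v2 v3 y y1 y2 y3; have delta_linear := hdelta.1.
have [-> -> -> ->] : [/\ one = vbasis Z sqrtm1 E1, y = vbasis Z sqrtm1 X,
    v3 = vbasis Z sqrtm1 W3 & y3 = vbasis Z sqrtm1 X3] by rewrite !vbasisE /= !scale1r.
have [-> -> -> ->] : [/\ v1 = vbasis Z sqrtm1 W1, v2 = vbasis Z sqrtm1 W2,
    y1 = vbasis Z sqrtm1 X1 & y2 = vbasis Z sqrtm1 X2] by rewrite !vbasisE.
exists (S4act sqrtm1); split; first exact: S4actM.
split; first exact: S4act_inj.
split.
  move=> s; split; first exact: S4act_automorphism.
  by split; [exact: S4act_even | exact: S4act_Zlinear].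
do 2 (split; first by move=> u hu; rewrite (S4act_grading _ S4rot_tau1 _ hu) /=
  ?scale1r ?scaleN1r).
do 2 (split; first by move=> u hu; rewrite (S4act_grading _ S4rot_tau2 _ hu) /=
  ?scale1r ?scaleN1r).
rewrite !(S4act_vbasis _ hsqrtm1 _ S4rot_phi) !(S4act_vbasis _ hsqrtm1 _ S4rot_tau) /=.
by rewrite !scale1r !scaleN1r.
Qed.
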